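(* Let $p\in\mathcal{P}$ and $\varphi\in\mathrm{Stab}_{G^*}(p)$. Then: (i) if $\varphi\in G$, all orbits of $\langle\varphi\rangle$ on $I$ have the same size $b=|\varphi|$ (the order of $\varphi$), and if $r$ is the number of orbits then $br=2n$; (ii) if $\varphi\in G^*\setminus G$, all orbits of $\langle\varphi\rangle$ on $I$ have the same size $b=|\varphi|$, $b$ is even, and if $r$ is the number of orbits then $br=2n$.
   Context: Fix $n\ge 2$, $W=\{1,\dots,n\}$, $M=\{n+1,\dots,2n\}$, $I=W\cup M$. Permutations compose right-to-left. A preference profile is a function $p$ on $I$ assigning to each $x\in W$ a linear order $p(x)$ on $M$ and to each $y\in M$ a linear order $p(y)$ on $W$; $\mathcal{P}$ is the set of preference profiles. $G^*=\{\varphi\in\mathrm{Sym}(I):\{\varphi(W),\varphi(M)\}=\{W,M\}\}$ and $G=\{\varphi\in\mathrm{Sym}(I):\varphi(W)=W,\ \varphi(M)=M\}$. For a linear order $R$ on $X\subseteq I$ and $\varphi\in\mathrm{Sym}(I)$, $\varphi R$ is the relation on $\varphi(X)$ with $(a,b)\in\varphi R$ iff $(\varphi^{-1}(a),\varphi^{-1}(b))\in R$. For $\varphi\in G^*$, $p^\varphi(z)=\varphi\,p(\varphi^{-1}(z))$, and $\mathrm{Stab}_{G^*}(p)=\{\varphi\in G^*:p^\varphi=p\}$. *)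

(* Agents I = {1..2n} are relabelled as 'I_(2*n) = {0..2n-1}:
   W = {0..n-1} (paper's 1..n), M = {n..2n-1} (paper's n+1..2n). *)
From mathcomp Require Import all_boot all_order all_fingroup.
Set Implicit Arguments. Unset Strict Implicit. Unset Printing Implicit Defensive.

Section Defs.
Variable n : nat.
Notation I := 'I_(2 * n).

Definition Wset : {set I} := [set i : I | i < n].
Definition Mset : {set I} := [set i : I | n <= i].

Definition linear_order_on (X : {set I}) (R : rel I) : Prop :=
  [/\ forall a b, R a b -> (a \in X) && (b \in X),
      forall a, a \in X -> R a a,
      forall a b, R a b -> R b a -> a = b,
      forall a b c, R a b -> R b c -> R a c
    & forall a b, a \in X -> b \in X -> R a b || R b a].

Definition is_profile (p : I -> rel I) : Prop :=
  (forall x, x \in Wset -> linear_order_on Mset (p x)) /\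
  (forall y, y \in Mset -> linear_order_on Wset (p y)).

Definition Gstar : {set {perm I}} :=
  [set phi : {perm I} | [set phi @: Wset; phi @: Mset] == [set Wset; Mset]].

Definition Gsub : {set {perm I}} :=
  [set phi : {perm I} | (phi @: Wset == Wset) && (phi @: Mset == Mset)].

Definition act_rel (phi : {perm I}) (R : rel I) : rel I :=
  fun a b => R ((phi^-1)%g a) ((phi^-1)%g b).

Definition act_prof (phi : {perm I}) (p : I -> rel I) : I -> rel I :=
  fun z => act_rel phi (p ((phi^-1)%g z)).

Definition in_stab (p : I -> rel I) (phi : {perm I}) : Prop :=
  phi \in Gstar /\ (forall z a b, act_prof phi p z a b = p z a b).

Definition cyc_orbits (phi : {perm I}) : {set {set I}} :=
  [set orbit 'P <[phi]> x | x : I].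

End Defs.

From mathcomp Require Import all_boot all_order all_fingroup.

Set Implicit Arguments. Unset Strict Implicit. Unset Printing Implicit Defensive.

(* A permutation of a finite set that preserves a linear order is the identity
   on it. If g stabilises p and fixes an agent z, then g preserves the
   order p(z) on the opposite side, so g fixes that side pointwise; applying
   the same argument to any fixed agent of the opposite side, g = 1. Hence
   <phi> acts freely on I: every orbit has #[phi] elements and there are
   2n / #[phi] of them. If moreover phi exchanges W and M, then phi^k maps W
   to W exactly when k is even, and phi^#[phi] = 1 forces #[phi] to be even. *)

Section PermFacts.
Variable T : finType.
Implicit Types (f : {perm T}) (R : rel T).

Lemma homo_perm_rel_sym f R a :
  {homo f : x y / R x y} -> transitive R -> R a a -> R a (f a) -> R (f a) a.
Proof.
move=> fR Rtr Raa Rafa.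
have Rk k : R a ((f ^+ k)%g a).
  elim: k => [|k IHk]; first by rewrite expg0 perm1.
  by rewrite expgSr permM; apply: Rtr Rafa (fR _ _ IHk).
have /fR := Rk #[f]%g.-1.
by rewrite -permM -expgSr prednK ?order_gt0 // expg_order perm1.
Qed.

Lemma homo_perm_fix f R a :
  {homo f : x y / R x y} -> transitive R -> antisymmetric R ->
  R a a -> R a (f a) || R (f a) a -> f a = a.
Proof.
move=> fR Rtr Ranti Raa /orP[] Rfa; apply: Ranti; rewrite Rfa.
- by rewrite homo_perm_rel_sym.
- apply: (@homo_perm_rel_sym f (fun x y => R y x)) => // [x y|y x z]; first exact: fR.
  by move=> Ryx Rzy; apply: Rtr Rzy Ryx.
Qed.

Lemma perm_swap_order_even f (A : {set T}) (x0 : T) :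
  (forall x, (f x \in A) = (x \notin A)) -> ~~ odd #[f]%g.
Proof.
move=> fA.
have fkA k : ((f ^+ k)%g x0 \in A) = (x0 \in A) (+) odd k.
  elim: k => [|k IHk]; first by rewrite expg0 perm1 addbF.
  by rewrite expgSr permM fA IHk /= addbN.
by have := fkA #[f]%g; rewrite expg_order perm1; case: (odd _); case: (_ \in A).
Qed.

Section FreeCycle.
Variable f : {perm T}.
Hypothesis f_free : forall k x, (f ^+ k)%g x = x -> (f ^+ k)%g = 1%g.

Lemma card_orbit_free x : #|orbit 'P <[f]> x| = #[f]%g.
Proof.
rewrite card_orbit; suff -> : 'C_<[f]>[x | 'P]%g = 1%g by rewrite indexg1.
apply/trivgP/subsetP => g /setIP[/cycleP[k ->] /astab1P fix_x].
by rewrite inE (f_free fix_x).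
Qed.

Lemma order_mul_card_orbits_free :
  #[f]%g * #|[set orbit 'P <[f]> x | x : T]| = #|T|.
Proof.
set orbits := [set orbit 'P <[f]> x | x : T].
have partT : partition orbits [set: T].
  have -> : orbits = orbit 'P <[f]> @: [set: T].
    by apply/setP => O; apply/imsetP/imsetP => -[x _ ->]; exists x.
  by apply: orbit_partition; apply/actsP => g _ x; rewrite !inE.
have orbit_size : {in orbits, forall O : {set T}, #|O| = #[f]%g}.
  by move=> _ /imsetP[x _ ->]; apply: card_orbit_free.
by rewrite -cardsT (card_uniform_partition orbit_size partT) mulnC.
Qed.

End FreeCycle.
End PermFacts.

Section Profiles.
Variable n : nat.
Notation I := 'I_(2 * n).
Implicit Types (g : {perm I}) (x y z : I).

Lemma in_Mset x : (x \in Mset n) = (x \notin Wset n).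
Proof. by rewrite !inE -leqNgt. Qed.

Lemma linear_order_homo_fix (X : {set I}) (R : rel I) g :
  linear_order_on X R -> {homo g : x y / R x y} -> {in X, forall y, g y = y}.
Proof.
move=> [RX Rrefl Ranti Rtr Rtot] gR y yX.
have /RX/andP[gyX _] : R (g y) (g y) by rewrite gR ?Rrefl.
apply: (homo_perm_fix gR) => //; last by rewrite Rtot.
- by move=> b a c; apply: Rtr.
- by move=> a b /andP[]; apply: Ranti.
- exact: Rrefl.
Qed.

Lemma Gsub_of_Wset_fixed g : g @: Wset n = Wset n -> g \in Gsub n.
Proof.
move=> gW; rewrite inE gW eqxx; apply/eqP/setP => x.
have memg := mem_imset _ _ (@perm_inj _ g).
by rewrite -[x](permKV g) memg !in_Mset -memg gW.
Qed.

Lemma Gstar_setD_Gsub_swap g :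
  g \in Gstar n :\: Gsub n -> forall x, (g x \in Wset n) = (x \notin Wset n).
Proof.
case/setDP; rewrite inE => /eqP gWM gNsub x.
have : g @: Wset n \in [set Wset n; Mset n] by rewrite -gWM !inE eqxx.
case/set2P=> [/Gsub_of_Wset_fixed gsub | gW]; first by rewrite gsub in gNsub.
by rewrite -(mem_imset (Wset n) x (@perm_inj _ g)) gW in_Mset negbK.
Qed.

Variable p : I -> rel I.

Definition profile_invariant g := forall z a b, p (g z) (g a) (g b) = p z a b.

Lemma in_stab_invariant g : in_stab p g -> profile_invariant g.
Proof.
by move=> [_ gp] z a b; rewrite -gp /act_prof /act_rel !permK.
Qed.

Lemma profile_invariantX g k : profile_invariant g -> profile_invariant (g ^+ k)%g.
Proof.
move=> gp; elim: k => [|k IHk] z a b; first by rewrite expg0 !perm1.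
by rewrite expgSr !permM gp IHk.
Qed.

Hypothesis p_profile : is_profile p.

Lemma invariant_fix_opposite g z y : profile_invariant g -> g z = z ->
  (y \in Wset n) != (z \in Wset n) -> g y = y.
Proof.
move=> gp gz; have gR : {homo g : a b / p z a b} by move=> a b; rewrite -{2}gz gp.
have [pW pM] := p_profile.
case: (boolP (z \in Wset n)) => [zW | zNW] yz.
- by apply: (linear_order_homo_fix (pW z zW) gR); rewrite in_Mset; case: (y \in _) yz.
- have zM : z \in Mset n by rewrite in_Mset.
  by apply: (linear_order_homo_fix (pM z zM) gR); case: (y \in _) yz.
Qed.

Lemma invariant_fix_trivial g z : profile_invariant g -> g z = z -> g = 1%g.
Proof.
move=> gp gz; have n_gt0 : 0 < n by case: n z {gz} => [[]|].
have [y yz] : exists y : I, (y \in Wset n) != (z \in Wset n).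
  have ltn_2n : n < 2 * n by rewrite mul2n -addnn -{1}[n]addn0 ltn_add2l.
  have lt0_2n : 0 < 2 * n by rewrite muln_gt0.
  case: (z \in Wset n); [exists (Ordinal ltn_2n) | exists (Ordinal lt0_2n)];
    by rewrite inE ?ltnn ?n_gt0.
have gy := invariant_fix_opposite gp gz yz.
apply/permP => x; rewrite perm1.
have [xz | xNz] := eqVneq (x \in Wset n) (z \in Wset n).
- by apply: (invariant_fix_opposite gp gy); rewrite xz eq_sym.
- exact: invariant_fix_opposite gp gz xNz.
Qed.

End Profiles.

Theorem proposition15 (n : nat) (hn : 2 <= n)
    (p : 'I_(2 * n) -> rel 'I_(2 * n)) (phi : {perm 'I_(2 * n)}) :
  is_profile p -> in_stab p phi ->
  (phi \in Gsub n ->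
     (forall O, O \in cyc_orbits phi -> #|O| = #[phi]%g) /\
     #[phi]%g * #|cyc_orbits phi| = 2 * n) /\
  (phi \in Gstar n :\: Gsub n ->
     (forall O, O \in cyc_orbits phi -> #|O| = #[phi]%g) /\
     ~~ odd #[phi]%g /\
     #[phi]%g * #|cyc_orbits phi| = 2 * n).
Proof.
move=> p_profile /in_stab_invariant phi_inv.
have phi_free k x : (phi ^+ k)%g x = x -> (phi ^+ k)%g = 1%g.
  by move=> fix_x; apply: (invariant_fix_trivial p_profile _ fix_x); apply: profile_invariantX.
have orbit_size O : O \in cyc_orbits phi -> #|O| = #[phi]%g.
  by case/imsetP=> x _ ->; apply: card_orbit_free.
have orbit_count : #[phi]%g * #|cyc_orbits phi| = 2 * n.
  by rewrite order_mul_card_orbits_free // card_ord.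
split=> // /Gstar_setD_Gsub_swap phi_swap; do 2!split=> //.
have lt0_2n : 0 < 2 * n by rewrite muln_gt0 (leq_trans _ hn).
exact: perm_swap_order_even (Ordinal lt0_2n) phi_swap.
Qed.
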